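(* Let $\mathcal{S}_1,\dots,\mathcal{S}_n\subseteq\mathbb{R}^D$ be independent linear subspaces (i.e. $\sum_{\ell=1}^n d_\ell=\dim(\sum_\ell\mathcal{S}_\ell)$, $d_\ell=\dim\mathcal{S}_\ell$), and let $\mathcal{X}=\{\boldsymbol{x}_1,\dots,\boldsymbol{x}_N\}\subseteq\bigcup_\ell\mathcal{S}_\ell$ consist of unit-norm vectors such that each $\mathcal{S}_\ell$ contains at least $d_\ell$ points of $\mathcal{X}$ spanning $\mathcal{S}_\ell$. For every integer $k\ge\sum_{\ell=1}^n d_\ell$, any $\mathcal{X}_0^*\in\arg\min_{\mathcal{X}_0\subseteq\mathcal{X},|\mathcal{X}_0|\le k}F_\infty(\mathcal{X}_0)$ contains at least $d_\ell$ linearly independent points from each $\mathcal{S}_\ell$. Moreover, with $\mathcal{X}_0=\mathcal{X}_0^*$, the problem defining $f_\infty(\boldsymbol{x}_j,\mathcal{X}_0^* )$ is feasible for every $\boldsymbol{x}_j\in\mathcal{X}$ and all of its optimal solutions are subspace-preserving.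
   Context: For $\mathcal{X}_0\subseteq\mathcal{X}$ and $\boldsymbol{x}_j\in\mathcal{X}$, $f_\infty(\boldsymbol{x}_j,\mathcal{X}_0):=\min_{\boldsymbol{c}\in\mathbb{R}^N}\|\boldsymbol{c}\|_1$ subject to $\boldsymbol{x}_j=\sum_{i:\boldsymbol{x}_i\in\mathcal{X}_0}c_i\boldsymbol{x}_i$, with $f_\infty(\boldsymbol{x}_j,\mathcal{X}_0):=\infty$ if infeasible; $F_\infty(\mathcal{X}_0):=\sup_{\boldsymbol{x}_j\in\mathcal{X}}f_\infty(\boldsymbol{x}_j,\mathcal{X}_0)$. A vector $\boldsymbol{c}\in\mathbb{R}^N$ associated with $\boldsymbol{x}_j$ is subspace-preserving if $c_i\neq0$ implies that $\boldsymbol{x}_i$ and $\boldsymbol{x}_j$ lie in the same subspace $\mathcal{S}_\ell$. *)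

From HB Require Import structures.
From mathcomp Require Import all_boot all_order all_algebra.
From mathcomp Require Import all_classical all_reals ereal.
Set Implicit Arguments. Unset Strict Implicit. Unset Printing Implicit Defensive.
Import Order.TTheory GRing.Theory Num.Theory.
Local Open Scope ring_scope.
Local Open Scope classical_set_scope.

Definition norm1 (R : realType) (N : nat) (c : 'I_N -> R) : R :=
  \sum_(i < N) `|c i|.

Definition feasible (R : realType) (D N : nat) (X : 'I_N -> 'rV[R]_D)
  (X0 : {set 'I_N}) (j : 'I_N) (c : 'I_N -> R) : Prop :=
  X j = \sum_(i in X0) c i *: X i.

(* f_oo(x_j, X0) : min of ||c||_1 over feasible c, +oo if infeasible
   (ereal_inf of the empty set is +oo). *)
Definition f_inf (R : realType) (D N : nat) (X : 'I_N -> 'rV[R]_D)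
  (j : 'I_N) (X0 : {set 'I_N}) : \bar R :=
  ereal_inf [set (norm1 c)%:E | c in [set c | feasible X X0 j c]].

Definition F_inf (R : realType) (D N : nat) (X : 'I_N -> 'rV[R]_D)
  (X0 : {set 'I_N}) : \bar R :=
  ereal_sup [set f_inf X j X0 | j in [set: 'I_N]].

Definition optimal_sol (R : realType) (D N : nat) (X : 'I_N -> 'rV[R]_D)
  (X0 : {set 'I_N}) (j : 'I_N) (c : 'I_N -> R) : Prop :=
  feasible X X0 j c /\
  forall c', feasible X X0 j c' -> norm1 c <= norm1 c'.

Definition subspace_preserving (R : realType) (D N n : nat)
  (S : 'I_n -> 'M[R]_D) (X : 'I_N -> 'rV[R]_D) (j : 'I_N) (c : 'I_N -> R)
  : Prop :=
  forall i, c i != 0 ->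
    exists l : 'I_n, (X i <= S l)%MS /\ (X j <= S l)%MS.

Definition sqnorm (R : realType) (D : nat) (v : 'rV[R]_D) : R :=
  \sum_(k < D) (v 0 k) ^+ 2.

From HB Require Import structures.
From mathcomp Require Import all_boot all_order all_algebra.
From mathcomp Require Import all_classical all_reals ereal.
Import Order.TTheory GRing.Theory Num.Theory.
Local Open Scope ring_scope.

(* Independence makes the sum of the S_l direct.  Hence, if x_j lies in S_l
   and is a combination of points of X, the part of the combination carried
   by points outside S_l lies both in S_l and in the sum of the other
   subspaces, so it vanishes: dropping those coefficients keeps feasibility
   and strictly lowers the l1 norm, which makes optimal solutions
   subspace-preserving.  The union of the spanning families has at most
   sum_l d_l <= k points and makes every x_j feasible, so F_oo of a minimiser
   X_0^* is finite, i.e. every x_j is feasible over X_0^*.  Projecting these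
   combinations onto S_l shows that the points of X_0^* lying in S_l span
   S_l, and a maximal free subfamily of them has d_l elements. *)

Lemma card_bigcup_le {I T : finType} (F : I -> {set T}) :
  (#|\bigcup_i F i| <= \sum_i #|F i|)%N.
Proof.
apply: (big_ind2 (fun (A : {set T}) s => #|A| <= s)%N) => [|A a B b leAa leBb|//].
  by rewrite cards0.
exact: leq_trans (leq_card_setU A B).1 (leq_add leAa leBb).
Qed.

Definition points_in {K : fieldType} {D n N : nat} (S : 'I_n -> 'M[K]_D)
  (X : 'I_N -> 'rV[K]_D) (l : 'I_n) : {set 'I_N} := [set i | (X i <= S l)%MS].

Section IndependentSubspaces.
Local Set Implicit Arguments.
Local Unset Strict Implicit.

Context {K : fieldType} {D n : nat} {S : 'I_n -> 'M[K]_D}.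
Hypothesis S_indep : (\sum_(l < n) \rank (S l))%N = \rank (\sum_(l < n) S l)%MS.

Lemma sub_sum_compl_eq0 l (v : 'rV_D) :
  (v <= S l)%MS -> (v <= \sum_(m | m != l) S m)%MS -> v = 0.
Proof.
move=> v_l v_compl.
have /mxdirect_sumsP/(_ l isT) capS0 : mxdirect (\sum_(l < n) S l)%MS.
  by rewrite mxdirectE /= S_indep.
by apply/eqP; rewrite -submx0 -capS0 sub_capmx v_l.
Qed.

Context {N : nat} {X : 'I_N -> 'rV[K]_D}.
Hypothesis X_union : forall j, exists l, (X j <= S l)%MS.

Lemma lin_comb_points_in (U : {set 'I_N}) (c : 'I_N -> K) j l :
  (X j <= S l)%MS -> X j = \sum_(i in U) c i *: X i ->
  X j = \sum_(i in U :&: points_in S X l) c i *: X i.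
Proof.
move=> Xj_l Xj_eq.
set A := \sum_(i in U :&: _) _.
set B := \sum_(i in U :\: points_in S X l) c i *: X i.
have Xj_AB : X j = A + B by rewrite Xj_eq (big_setID (points_in S X l)).
have A_l : (A <= S l)%MS.
  by apply: summx_sub => i; rewrite !inE => /andP[_ Xi_l]; exact: scalemx_sub.
have B_l : (B <= S l)%MS.
  by rewrite (_ : B = X j - A) ?addmx_sub ?eqmx_opp // Xj_AB addrC addKr.
have B_compl : (B <= \sum_(m | m != l) S m)%MS.
  apply: summx_sub => i; rewrite !inE => /andP[Xi_nl _]; apply: scalemx_sub.
  have [m Xi_m] := X_union i.
  have m_neq_l : m != l by apply: contraNneq Xi_nl => <-.
  exact: submx_trans Xi_m (sumsmx_sup m m_neq_l (submx_refl _)).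
by rewrite Xj_AB (sub_sum_compl_eq0 B_l B_compl) addr0.
Qed.

End IndependentSubspaces.

Lemma row_free_free {K : fieldType} {m n : nat} (A : 'M[K]_(m, n)) :
  row_free A -> free [seq row i A | i <- enum 'I_m].
Proof.
move=> A_free; rewrite -val_ord_tuple -[map _ _]/(val (map_tuple _ _)).
apply/freeP => k k_eq i.
have /eqP : (\row_i k i) *m A = 0.
  rewrite mulmx_sum_row -[RHS]k_eq; apply: eq_bigr => a _.
  by rewrite -tnth_nth tnth_map tnth_ord_tuple mxE.
by rewrite mulmx_free_eq0 // => /eqP/rowP/(_ i); rewrite !mxE.
Qed.

Lemma exists_free_subset {K : fieldType} {D N : nat} (X : 'I_N -> 'rV[K]_D)
    (U : {set 'I_N}) :
  exists T : {set 'I_N}, [/\ T \subset U,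
    #|T| = \rank (\sum_(i in U) <<X i>>)%MS & free [seq X i | i in T]].
Proof.
pose M := \matrix_(a < #|U|) X (enum_val a).
have M_span : (M :=: \sum_(i in U) <<X i>>)%MS.
  apply/eqmxP/andP; split.
    apply/row_subP => a; rewrite rowK.
    by rewrite (sumsmx_sup (enum_val a)) ?enum_valP ?genmxE.
  apply/sumsmx_subP => i Ui; rewrite genmxE.
  by rewrite (eq_row_sub (enum_rank_in Ui i)) // rowK enum_rankK_in.
pose g a := enum_val (maxrankfun M a).
have g_inj : injective g by move=> a b /enum_val_inj /maxrankfun_inj.
exists (g @: [set: 'I_(\rank M)]); split.
- by apply/fintype.subsetP => _ /imsetP[a _ ->]; exact: enum_valP.
- by rewrite card_imset // cardsT card_ord M_span.
have rows_g : [seq X (g a) | a <- enum 'I_(\rank M)] =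
              [seq row a (rowsub (maxrankfun M) M) | a <- enum 'I_(\rank M)].
  by apply: eq_map => a; rewrite row_rowsub rowK.
have perm_g : perm_eq [seq X i | i in g @: [set: 'I_(\rank M)]]
                      [seq X (g a) | a <- enum 'I_(\rank M)].
  rewrite /image_mem (map_comp X g); apply: perm_map.
  apply: uniq_perm; rewrite ?(map_inj_uniq g_inj) ?enum_uniq // => i.
  by rewrite mem_enum; apply/imsetP/mapP => -[a _ ->]; exists a; rewrite ?mem_enum.
by rewrite (perm_free perm_g) rows_g row_free_free ?maxrowsub_free.
Qed.

Section Feasibility.
Local Set Implicit Arguments.
Local Unset Strict Implicit.

Context {R : realType} {D N : nat} {X : 'I_N -> 'rV[R]_D}.

Lemma feasibleP (U : {set 'I_N}) j :
  (exists c, feasible X U j c) <-> (X j <= \sum_(i in U) <<X i>>)%MS.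
Proof.
split=> [[c ->]|/sub_sums_genmxP[u Xj_eq]].
  by apply: summx_sub_sums => i _; rewrite genmxE scalemx_sub.
exists (fun i => u i 0 0); rewrite /feasible Xj_eq; apply: eq_bigr => i _.
by rewrite {1}(mx11_scalar (u i)) mul_scalar_mx.
Qed.

Lemma norm1_ge0 (c : 'I_N -> R) : 0 <= norm1 c.
Proof. by apply: sumr_ge0 => i _; exact: normr_ge0. Qed.

Lemma norm1_restrict_lt (P : {pred 'I_N}) (c : 'I_N -> R) i0 :
  i0 \notin P -> c i0 != 0 ->
  norm1 (fun i => if i \in P then c i else 0) < norm1 c.
Proof.
move=> i0_nP ci0_neq0; rewrite /norm1 [ltRHS](bigD1 i0) //= (bigD1 i0) //=.
rewrite ifN // normr0 ltr_leD ?normr_gt0 //.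
by apply: ler_sum => i _; case: ifP; rewrite ?normr0.
Qed.

Lemma f_inf_le_norm1 U j c : feasible X U j c -> (f_inf X j U <= (norm1 c)%:E)%E.
Proof. by move=> c_feas; apply: ereal_inf_lbound; exists c. Qed.

Lemma f_inf_infeasible U j :
  ~ (exists c, feasible X U j c) -> f_inf X j U = +oo%E.
Proof.
move=> infeas; rewrite /f_inf; set E := (Y in ereal_inf Y).
suff -> : E = set0 by exact: ereal_inf0.
by apply/seteqP; split=> // x [c c_feas _]; apply: infeas; exists c.
Qed.

Lemma F_inf_lt_pinfty U :
  (forall j, exists c, feasible X U j c) -> (F_inf X U < +oo)%E.
Proof.
move=> /boolp.choice[c c_feas].
apply: (@le_lt_trans _ _ (\sum_j norm1 (c j))%:E); last exact: ltry.
apply: ge_ereal_sup => _ [j _ <-]; apply: le_trans (f_inf_le_norm1 (c_feas j)) _.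
by rewrite lee_fin (bigD1 j) //= lerDl sumr_ge0 // => i _; exact: norm1_ge0.
Qed.

Lemma feasible_of_F_inf_lt_pinfty U :
  (F_inf X U < +oo)%E -> forall j, exists c, feasible X U j c.
Proof.
move=> F_fin j; apply: boolp.contrapT => /f_inf_infeasible f_oo.
have : (f_inf X j U <= F_inf X U)%E by apply: ereal_sup_ubound; exists j.
by rewrite f_oo leye_eq => /eqP F_oo; rewrite F_oo ltxx in F_fin.
Qed.

End Feasibility.

Section OptimalSolutions.
Local Set Implicit Arguments.
Local Unset Strict Implicit.

Context {R : realType} {D n N : nat} {S : 'I_n -> 'M[R]_D} {X : 'I_N -> 'rV[R]_D}.
Hypothesis S_indep : (\sum_(l < n) \rank (S l))%N = \rank (\sum_(l < n) S l)%MS.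
Hypothesis X_union : forall j, exists l, (X j <= S l)%MS.

Lemma feasible_restrict U j l c :
  (X j <= S l)%MS -> feasible X U j c ->
  feasible X U j (fun i => if i \in points_in S X l then c i else 0).
Proof.
move=> Xj_l /(lin_comb_points_in S_indep X_union Xj_l) Xj_eq.
rewrite /feasible Xj_eq [RHS](big_setID (points_in S X l)) /=.
rewrite [X in _ = _ + X]big1 ?addr0 => [|i]; last first.
  by rewrite !inE => /andP[/negPf-> _]; rewrite scale0r.
by apply: eq_bigr => i; rewrite !inE => /andP[_ ->].
Qed.

Lemma optimal_sol_subspace_preserving U j c :
  optimal_sol X U j c -> subspace_preserving S X j c.
Proof.
move=> [c_feas c_min] i ci_neq0; have [l Xj_l] := X_union j.
have [Xi_l|Xi_nl] := boolP (X i <= S l)%MS; first by exists l.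
have := c_min _ (feasible_restrict Xj_l c_feas).
by rewrite leNgt (norm1_restrict_lt _ ci_neq0) // inE.
Qed.

End OptimalSolutions.

Theorem theorem1 (R : realType) (D n N : nat)
  (S : 'I_n -> 'M[R]_D) (X : 'I_N -> 'rV[R]_D)
  (* independent subspaces: sum of dims = dim of sum *)
  (Hindep : (\sum_(l < n) \rank (S l))%N = \rank (\sum_(l < n) S l)%MS)
  (* X = {x_1,...,x_N} is a set of N distinct points *)
  (Hinj : injective X)
  (* X lies in the union of the subspaces *)
  (Hunion : forall j, exists l, (X j <= S l)%MS)
  (* unit-norm points *)
  (Hunit : forall j, sqnorm (X j) = 1)
  (* each S_l contains d_l points of X that span S_l *)
  (Hspan : forall l, exists T : {set 'I_N},
      #|T| = \rank (S l) /\ (forall i, i \in T -> (X i <= S l)%MS) /\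
      (\sum_(i in T) <<X i>> == S l)%MS)
  (k : nat) (Hk : (\sum_(l < n) \rank (S l) <= k)%N)
  (X0 : {set 'I_N}) (HX0card : (#|X0| <= k)%N)
  (HX0min : forall Y : {set 'I_N}, (#|Y| <= k)%N ->
      (F_inf X X0 <= F_inf X Y)%E) :
  (forall l, exists T : {set 'I_N},
      T \subset X0 /\ (\rank (S l) <= #|T|)%N /\
      (forall i, i \in T -> (X i <= S l)%MS) /\
      free [seq X i | i in T]) /\
  (forall j, (exists c, feasible X X0 j c) /\
     forall c, optimal_sol X X0 j c -> subspace_preserving S X j c).
Proof.
have [T T_spec] := boolp.choice Hspan.
pose Y := \bigcup_l T l.
have Y_card : (#|Y| <= k)%N.
  apply: leq_trans (card_bigcup_le T) _.
  by rewrite (eq_bigr _ (fun l _ => proj1 (T_spec l))).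
have Y_feas j : exists c, feasible X Y j c.
  apply/feasibleP; have [l Xj_l] := Hunion j.
  have [_ [_ /andP[_ S_T]]] := T_spec l.
  apply: submx_trans Xj_l (submx_trans S_T _).
  by apply/sumsmx_subP => t Tt; apply: (sumsmx_sup t) => //; apply/bigcupP; exists l.
have X0_feas : forall j, exists c, feasible X X0 j c.
  exact/feasible_of_F_inf_lt_pinfty/(le_lt_trans (HX0min Y Y_card))/F_inf_lt_pinfty.
split=> [l|j]; last first.
  by split=> [|c]; [exact: X0_feas | exact: optimal_sol_subspace_preserving].
have [F [F_sub F_rank F_free]] := exists_free_subset X (X0 :&: points_in S X l).
exists F; split; [|split; [|split]] => //.
- exact: fintype.subset_trans F_sub (subsetIl _ _).
- have [_ [T_l /andP[_ S_T]]] := T_spec l.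
  rewrite F_rank; apply/mxrankS/(submx_trans S_T)/sumsmx_subP => t Tt.
  rewrite genmxE; apply/feasibleP; have [c c_feas] := X0_feas t.
  by exists c; exact: (lin_comb_points_in Hindep Hunion (T_l t Tt) c_feas).
- by move=> i /(fintype.subsetP F_sub); rewrite !inE => /andP[].
Qed.
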